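(* Let $m>1$ and $n>0$ be integers. Then the size of the largest clique in ${\rm SR}(m,n)$ is $\max(m,n+1)$.
   Context: ${\rm SR}(m,n)$ is the graph whose vertices are the vectors in $\{0,1,2,\dots\}^m$ with coordinate sum $n$, two vertices being adjacent when they differ in precisely two coordinate positions. *)

From mathcomp Require Import all_boot all_order.
Set Implicit Arguments. Unset Strict Implicit. Unset Printing Implicit Defensive.

(* Vertices of SR(m,n): vectors in {0,1,2,...}^m with coordinate sum n.
   Since every coordinate of such a vector is at most n, we represent
   candidate vectors as finite functions 'I_m -> 'I_n.+1 (coordinates in
   {0,...,n}), and vertices are those with coordinate sum n. *)
Definition SRvec (m n : nat) := {ffun 'I_m -> 'I_n.+1}.

Definition SR_vertex (m n : nat) (x : SRvec m n) : bool :=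
  (\sum_(i < m) (x i : nat)) == n.

Definition SR_adj (m n : nat) (x y : SRvec m n) : bool :=
  #|[set i : 'I_m | x i != y i]| == 2.

Definition SR_clique (m n : nat) (K : {set SRvec m n}) : bool :=
  [forall x in K, SR_vertex x] &&
  [forall x in K, forall y in K, (x != y) ==> SR_adj x y].

Definition SR_clique_number (m n : nat) : nat :=
  \max_(K : {set SRvec m n} | SR_clique K) #|K|.

From mathcomp Require Import all_boot all_order.
From mathcomp Require Import zify.
Set Implicit Arguments. Unset Strict Implicit. Unset Printing Implicit Defensive.

(* Fix x in a clique K and let D(y) = {i | x_i != y_i}.  For y != x these
   are 2-sets, and any two of them meet, for otherwise the two vectors
   would differ in four coordinates.  If all D(y) lie in one 2-set {i,j},
   then y is determined by y_i, so |K| <= n+1.  Otherwise D(y) = {l,j} and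
   D(z) = {l,k} for some y, z.  No D(u) equals {j,k}: y, z, u would agree
   pairwise at l, j and k, and the three preserved pair sums would force
   y_l = x_l.  Hence every D(u) contains l and determines u, so |K| <= m.
   The vectors n e_i and t e_1 + (n-t) e_2 give cliques of sizes m, n+1. *)

Lemma card2_set2 (T : finType) (A : {set T}) a b :
  #|A| = 2 -> a \in A -> b \in A -> a != b -> A = [set a; b].
Proof.
move=> cardA aA bA ab; apply/eqP; rewrite eq_sym eqEcard cards2 ab cardA leqnn.
by rewrite andbT; apply/subsetP => c; rewrite !inE => /orP[]/eqP->.
Qed.

Lemma card2_other (T : finType) (A : {set T}) a :
  #|A| = 2 -> a \in A -> exists2 b, b != a & A = [set a; b].
Proof.
move=> cardA aA; have /cards1P [b Ab] : #|A :\ a| == 1.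
  by have := cardsD1 a A; rewrite aA cardA; lia.
have : b \in A :\ a by rewrite Ab set11.
rewrite !inE => /andP[ba bA]; exists b => //.
by apply: card2_set2; rewrite // eq_sym.
Qed.

Lemma pair_sums_eq a b c a' b' c' :
  a + b = a' + b' -> a + c = a' + c' -> b + c = b' + c' -> a = a'.
Proof. lia. Qed.

Section CliqueBound.
Variables m n : nat.
Local Notation vec := (SRvec m n).

Definition dset (x y : vec) : {set 'I_m} := [set i | x i != y i].

Lemma in_dset x y i : (i \in dset x y) = (x i != y i).
Proof. by rewrite inE. Qed.

Lemma dsetC x y : dset x y = dset y x.
Proof. by apply/setP => i; rewrite !in_dset eq_sym. Qed.

Lemma dset_id x : dset x x = set0.
Proof. by apply/setP => i; rewrite in_dset eqxx inE. Qed.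

Lemma in_dset_trans x y z i :
  i \in dset x y -> i \notin dset x z -> i \in dset z y.
Proof. by rewrite !in_dset negbK => xy /eqP <-. Qed.

Lemma dset_subU x y z : dset y z \subset dset x y :|: dset x z.
Proof.
apply/subsetP => i; rewrite !inE => yz; apply: contraTT yz.
by rewrite negb_or !negbK => /andP[/eqP <- /eqP <-].
Qed.

Lemma sum_split2 (x : vec) i j : i != j ->
  \sum_(k < m) (x k : nat) =
    x i + x j + \sum_(k < m | k \notin [set i; j]) (x k : nat).
Proof.
move=> ij; rewrite (bigD1 i) //= (bigD1 j) 1?eq_sym //= addnA.
by congr (_ + _); apply: eq_bigl => k; rewrite !inE negb_or andbC.
Qed.

Lemma sum_pair_eq x y i j : SR_vertex x -> SR_vertex y -> i != j ->
  dset x y \subset [set i; j] -> x i + x j = y i + y j.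
Proof.
move=> /eqP sx /eqP sy ij sub.
have rest : \sum_(k < m | k \notin [set i; j]) (x k : nat) =
            \sum_(k < m | k \notin [set i; j]) (y k : nat).
  apply: eq_bigr => k kij; congr nat_of_ord; apply/eqP.
  by apply: contraNT kij; rewrite -in_dset; apply: (subsetP sub).
apply: (@addIn (\sum_(k < m | k \notin [set i; j]) (y k : nat))).
by rewrite -{1}rest -!sum_split2 // sx sy.
Qed.

Variable K : {set vec}.
Hypothesis K_vertex : {in K, forall y, SR_vertex y}.
Hypothesis K_adj : {in K &, forall y z, y != z -> #|dset y z| = 2}.

Lemma dset_meet x y z : x \in K -> y \in K -> z \in K -> x != y -> x != z ->
  exists2 c, c \in dset x y & c \in dset x z.
Proof.
move=> xK yK zK xy xz; have cxy : #|dset x y| = 2 by rewrite K_adj.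
have [<-|yz] := eqVneq y z.
  have /card_gt0P [c cy] : 0 < #|dset x y| by rewrite cxy.
  by exists c.
have [c /andP[cy cz]|disj] := pickP [pred c | (c \in dset x y) && (c \in dset x z)].
  by exists c.
have sub : dset x y :|: dset x z \subset dset y z.
  apply/subsetP => c; rewrite inE => /orP[cD|cD].
    by rewrite dsetC (in_dset_trans cD) //; move: (disj c); rewrite /= cD => /negbT.
  by rewrite (in_dset_trans cD) //; move: (disj c); rewrite /= cD andbT => /negbT.
have := subset_leq_card sub; rewrite K_adj // cardsU cxy K_adj //.
suff -> : dset x y :&: dset x z = set0 by rewrite cards0.
by apply/setP => c; rewrite in_setI in_set0; apply: disj c.
Qed.

Lemma clique_agree x y z i j k : y \in K -> z \in K ->
  i != j -> i != k -> j != k ->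
  dset x y = [set i; j] -> dset x z = [set i; k] -> y i = z i.
Proof.
move=> yK zK ij ik jk Dy Dz.
have jy : j \in dset x y by rewrite Dy !inE eqxx orbT.
have ky : k \notin dset x y by rewrite Dy !inE negb_or ![k == _]eq_sym ik jk.
have kz : k \in dset x z by rewrite Dz !inE eqxx orbT.
have jz : j \notin dset x z by rewrite Dz !inE negb_or (eq_sym j) ij jk.
have jyz : j \in dset z y := in_dset_trans jy jz.
have kyz : k \in dset y z := in_dset_trans kz ky.
have yz : y != z by apply: contraTneq jyz => ->; rewrite dset_id inE.
have Dyz : dset y z = [set j; k] by apply: card2_set2; rewrite ?K_adj // dsetC.
have : i \notin dset y z by rewrite Dyz !inE negb_or ij ik.
by rewrite in_dset negbK => /eqP.
Qed.

Lemma no_triangle x y z u l j k : [/\ x \in K, y \in K, z \in K & u \in K] ->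
  l != j -> l != k -> j != k ->
  dset x y = [set l; j] -> dset x z = [set l; k] -> dset x u != [set j; k].
Proof.
case=> xK yK zK uK lj lk jk Dy Dz; apply/negP => /eqP Du.
have [jl kl kj] : [/\ j != l, k != l & k != j] by split; rewrite eq_sym.
have yl_zl : y l = z l := clique_agree yK zK lj lk jk Dy Dz.
have yj_uj : y j = u j by apply: (clique_agree yK uK jl jk lk _ Du); rewrite Dy setUC.
have zk_uk : z k = u k.
  by apply: (@clique_agree x z u k l j zK uK kl kj lj); rewrite ?Dz ?Du setUC.
have sub (w : vec) A : dset x w = A -> dset x w \subset A by move->.
have sy := sum_pair_eq (K_vertex xK) (K_vertex yK) lj (sub _ _ Dy).
have sz := sum_pair_eq (K_vertex xK) (K_vertex zK) lk (sub _ _ Dz).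
have su := sum_pair_eq (K_vertex xK) (K_vertex uK) jk (sub _ _ Du).
have xl_yl : x l = y l.
  by apply: val_inj; move: sz su; rewrite -yl_zl -zk_uk -yj_uj; apply: pair_sums_eq sy.
by move: (set21 l j); rewrite -Dy in_dset xl_yl eqxx.
Qed.

Lemma pair_card x i j : {in K, forall y, dset x y \subset [set i; j]} ->
  #|K| <= n.+1.
Proof.
move=> Dsub; rewrite -[X in _ <= X]card_ord; apply: (leq_card_in (fun y : vec => y i)).
move=> y z yK zK yz_i; apply/eqP; apply: contraT => yz.
suff : dset y z \subset [set j] by move/subset_leq_card; rewrite cards1 K_adj.
apply/subsetP => c cyz; rewrite inE.
have ci : c != i by apply: contraTneq cyz => ->; rewrite in_dset yz_i eqxx.
move/subsetP: (dset_subU x y z) => /(_ c cyz); rewrite inE.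
by case/orP=> [/(subsetP (Dsub y yK))|/(subsetP (Dsub z zK))];
  rewrite !inE (negbTE ci).
Qed.

Section Star.
Variables (x y z : vec) (l j k : 'I_m).
Hypotheses (xK : x \in K) (yK : y \in K) (zK : z \in K).
Hypotheses (lj : l != j) (lk : l != k) (jk : j != k).
Hypotheses (Dy : dset x y = [set l; j]) (Dz : dset x z = [set l; k]).

Lemma star_center u : u \in K -> x != u -> l \in dset x u.
Proof.
move=> uK xu; apply: contraT => lu.
have opposite w a : w \in K -> dset x w = [set l; a] -> a \in dset x u.
  move=> wK Dw; have xw : x != w.
    by apply: contraTneq (set21 l a) => xw; rewrite -Dw xw dset_id inE.
  have [c] := dset_meet xK wK uK xw xu; rewrite Dw in_set2.
  by case/orP=> /eqP-> //; rewrite (negbTE lu).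
have Du : dset x u = [set j; k].
  apply: card2_set2 => //; first by rewrite K_adj // eq_sym.
    exact: opposite yK Dy.
  exact: opposite zK Dz.
by move: (no_triangle (And4 xK yK zK uK) lj lk jk Dy Dz); rewrite Du eqxx.
Qed.

Lemma star_dset_inj u v : u \in K -> v \in K -> x != u -> x != v ->
  dset x u = dset x v -> u = v.
Proof.
move=> uK vK xu xv Duv; apply/eqP; apply: contraT => uv.
have [a al Du] := card2_other (K_adj xK uK xu) (star_center uK xu).
have [w [b [wK lb Dw ab]]] : exists w b,
    [/\ w \in K, l != b, dset x w = [set l; b] & a != b].
  have [-> | aj] := eqVneq a j; first by exists z, k.
  by exists y, j.
have la : l != a by rewrite eq_sym.
have uw : u l = w l := clique_agree uK wK la lb ab Du Dw.
have vw : v l = w l by apply: (clique_agree vK wK la lb ab _ Dw); rewrite -Duv.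
suff : dset u v \subset [set a] by move/subset_leq_card; rewrite cards1 K_adj.
apply/subsetP => c cuv; have := subsetP (dset_subU x u v) c cuv.
rewrite -Duv setUid Du !inE => /orP[/eqP cl|//].
by move: cuv; rewrite cl in_dset uw vw eqxx.
Qed.

Lemma star_card : #|K| <= m.
Proof.
pose f u := odflt l [pick i in dset x u :\ l].
have fP u : u \in K -> x != u -> f u != l /\ dset x u = [set l; f u].
  move=> uK xu.
  have [a al Du] := card2_other (K_adj xK uK xu) (star_center uK xu).
  suff -> : f u = a by [].
  rewrite /f Du setU1K; last by rewrite inE eq_sym.
  by case: pickP => [b /set1P -> // | /(_ a)]; rewrite set11.
rewrite -[X in _ <= X]card_ord; apply: (leq_card_in f) => u v uK vK.
have fx : f x = l by rewrite /f dset_id set0D; case: pickP => // b; rewrite inE.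
have [<- | xu] := eqVneq x u; have [<- | xv] := eqVneq x v => // fuv.
- by have [] := fP v vK xv; rewrite -fuv fx eqxx.
- by have [] := fP u uK xu; rewrite fuv fx eqxx.
- apply: star_dset_inj => //.
  by have [_ ->] := fP u uK xu; have [_ ->] := fP v vK xv; rewrite fuv.
Qed.

End Star.

Lemma clique_card_le : 0 < m -> #|K| <= maxn m n.+1.
Proof.
move=> m_gt0; have [->|[x xK]] := set_0Vmem K; first by rewrite cards0.
have [K1|[y]] := set_0Vmem (K :\ x).
  by have := cardsD1 x K; rewrite xK K1 cards0 => ->; rewrite leq_max m_gt0.
rewrite !inE eq_sym => /andP[xy yK]; have cardDy := K_adj xK yK xy.
have [/forall_inP Dsub | /forall_inPn [z zK Dz_notin]] :=
  boolP [forall z in K, dset x z \subset dset x y].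
  have /cards2P [a [b [_ Dy]]] : #|dset x y| == 2 by rewrite cardDy.
  by rewrite leq_max (@pair_card x a b) ?orbT // => z /Dsub; rewrite Dy.
have xz : x != z by apply: contraNneq Dz_notin => <-; rewrite dset_id sub0set.
have [l ly lz] := dset_meet xK yK zK xy xz.
have [j jl Dy] := card2_other cardDy ly.
have [k kz ky] := subsetPn Dz_notin.
have [lk jk] : l != k /\ j != k.
  by split; apply: contraNneq ky => <-; rewrite // Dy set22.
have Dz : dset x z = [set l; k] by apply: card2_set2; rewrite ?K_adj.
by rewrite leq_max (star_card xK yK zK _ lk jk Dy Dz) // eq_sym.
Qed.

End CliqueBound.

Lemma SR_adj_card m n (x y : SRvec m n) : SR_adj x y = (#|dset x y| == 2).
Proof. by []. Qed.

Lemma SR_adj_pair m n (x y : SRvec m n) i j : i != j ->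
  x i != y i -> x j != y j -> (forall k, k != i -> k != j -> x k = y k) ->
  SR_adj x y.
Proof.
move=> ij xyi xyj xy_else; rewrite SR_adj_card.
suff -> : dset x y = [set i; j] by rewrite cards2 ij.
apply/setP => k; rewrite in_dset !inE.
have [-> | ki] := eqVneq k i; first by rewrite xyi.
have [-> | kj] := eqVneq k j; first by rewrite xyj.
by rewrite xy_else ?eqxx.
Qed.

Lemma SR_cliqueP m n (K : {set SRvec m n}) :
  reflect ({in K, forall x, SR_vertex x} /\
           {in K &, forall x y, x != y -> SR_adj x y})
          (SR_clique K).
Proof.
apply: (iffP andP) => [[/forall_inP V /forall_inP A] | [V A]]; split.
- exact: V.
- by move=> x y xK yK; move/forall_inP: (A x xK) => /(_ y yK)/implyP.
- exact/forall_inP.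
- by apply/forall_inP => x xK; apply/forall_inP => y yK; apply/implyP/A.
Qed.

Lemma clique_number_le m n : 0 < m -> SR_clique_number m n <= maxn m n.+1.
Proof.
move=> m_gt0; apply/bigmax_leqP => K /SR_cliqueP [V A].
by apply: clique_card_le => // x y xK yK xy; apply/eqP; rewrite -SR_adj_card A.
Qed.

Lemma clique_number_ge_image m n (I : finType) (f : I -> SRvec m n) :
  (forall i, SR_vertex (f i)) ->
  (forall i j, i != j -> SR_adj (f i) (f j)) -> #|I| <= SR_clique_number m n.
Proof.
move=> V A; have f_inj : injective f.
  move=> i j fij; apply/eqP; apply: contraT => /A.
  by rewrite fij SR_adj_card dset_id cards0.
rewrite -cardsT -(card_imset _ f_inj); apply: leq_bigmax_cond.
apply/SR_cliqueP; split; first by move=> _ /imsetP[i _ ->].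
move=> _ _ /imsetP[i _ ->] /imsetP[j _ ->] fij.
by apply: A; apply: contraNneq fij => ->.
Qed.

Lemma clique_number_ge_m m n : 0 < n -> m <= SR_clique_number m n.
Proof.
move=> n_gt0; pose e i : SRvec m n := [ffun k => if k == i then ord_max else ord0].
have max_neq0 : ord_max != ord0 :> 'I_n.+1 by rewrite -val_eqE /= -lt0n.
rewrite -[X in X <= _]card_ord; apply: (@clique_number_ge_image _ _ _ e).
  move=> i; rewrite /SR_vertex (bigD1 i) //= big1 => [|k ki]; rewrite /e ffunE.
    by rewrite eqxx addn0.
  by rewrite (negbTE ki).
move=> i j ij; apply: (SR_adj_pair ij); rewrite /e ?ffunE ?eqxx.
- by rewrite (negbTE ij).
- by rewrite [j == i]eq_sym (negbTE ij) eq_sym.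
- by move=> k; rewrite !ffunE => /negbTE-> /negbTE->.
Qed.

Lemma clique_number_ge_n m n : 1 < m -> n.+1 <= SR_clique_number m n.
Proof.
move=> m_gt1; pose i0 := Ordinal (ltnW m_gt1); pose i1 := Ordinal m_gt1.
have i01 : i0 != i1 by rewrite -val_eqE.
pose g t : SRvec m n :=
  [ffun k => if k == i0 then t else if k == i1 then rev_ord t else ord0].
rewrite -[X in X <= _]card_ord; apply: (@clique_number_ge_image _ _ _ g).
  move=> t; rewrite /SR_vertex (sum_split2 _ i01) big1 => [|k].
    rewrite /g !ffunE eqxx [i1 == i0]eq_sym (negbTE i01) eqxx addn0 /=.
    by rewrite subSS subnKC // -ltnS.
  by rewrite !inE negb_or /g ffunE => /andP[/negbTE-> /negbTE->].
move=> t s ts; apply: (SR_adj_pair i01); rewrite /g ?ffunE ?eqxx.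
- by [].
- by rewrite [i1 == i0]eq_sym (negbTE i01) (inj_eq rev_ord_inj).
- by move=> k; rewrite !ffunE => /negbTE-> /negbTE->.
Qed.

Theorem proposition10 (m n : nat) (hm : 1 < m) (hn : 0 < n) :
  SR_clique_number m n = maxn m n.+1.
Proof.
apply/eqP; rewrite eqn_leq clique_number_le ?(ltnW hm) //.
by rewrite geq_max clique_number_ge_m ?clique_number_ge_n.
Qed.
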